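(* Let $\mathcal K\subseteq\mathbb R^n$ be convex, $f:\mathcal K\to\mathbb R$ convex and differentiable with a minimizer $x^\star\in\mathcal K$. Let $x_1,x_2,\dots\in\mathcal K$ be arbitrary, let $w_0,w_1,\dots$ be positive numbers, and define $\bar x_t=\frac{\sum_{k=0}^tw_kx_{k+1}}{\sum_{k=0}^tw_k}$. Let $\tilde\eta_0\ge\tilde\eta_1\ge\tilde\eta_2\ge\cdots$ be positive numbers. Then for every $T>0$, \[ \sum_{t=0}^{T-1}w_t\tilde\eta_t\langle\nabla f(\bar x_t),x_{t+1}-x^\star\rangle\ge0. \] *)

From HB Require Import structures.
From mathcomp Require Import all_boot all_order all_algebra.
From mathcomp Require Import all_classical all_reals all_analysis.
Set Implicit Arguments. Unset Strict Implicit. Unset Printing Implicit Defensive.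
Import Order.TTheory GRing.Theory Num.Theory.
Import numFieldNormedType.Exports.
Local Open Scope classical_set_scope.
Local Open Scope ring_scope.

Definition convex_setK (R : realType) (n : nat) (K : set 'rV[R]_n) :=
  forall x y (t : R), K x -> K y -> 0 <= t <= 1 -> K (t *: x + (1 - t) *: y).

Definition convex_on (R : realType) (n : nat) (K : set 'rV[R]_n)
  (f : 'rV[R]_n -> R) :=
  forall x y (t : R), K x -> K y -> 0 <= t <= 1 ->
    f (t *: x + (1 - t) *: y) <= t * f x + (1 - t) * f y.

Definition dotp (R : realType) (n : nat) (u v : 'rV[R]_n) : R :=
  \sum_(i < n) u 0 i * v 0 i.

Definition grad (R : realType) (n : nat) (f : 'rV[R]_n -> R) (x : 'rV[R]_n)
  : 'rV[R]_n :=
  \row_i ('d f x (delta_mx 0 i : 'rV[R]_n)).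

Definition wavg (R : realType) (n : nat) (w : nat -> R) (x : nat -> 'rV[R]_n)
  (t : nat) : 'rV[R]_n :=
  (\sum_(k < t.+1) w k)^-1 *: \sum_(k < t.+1) w k *: x k.+1.

From HB Require Import structures.
From mathcomp Require Import all_boot all_order all_algebra.
From mathcomp Require Import all_classical all_reals all_analysis.
From mathcomp Require Import ring.
Set Implicit Arguments. Unset Strict Implicit. Unset Printing Implicit Defensive.
Import Order.TTheory GRing.Theory Num.Theory.
Import numFieldNormedType.Exports.
Local Open Scope classical_set_scope.
Local Open Scope ring_scope.

(* With m_t := w_0 + ... + w_(t-1), consider the potential
   D_t := m_t (f(xbar_(t-1)) - f(xstar)), which is nonnegative and vanishes at t = 0.
   Since m_(t+1) xbar_t = m_t xbar_(t-1) + w_t x_(t+1), two applications of the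
   gradient inequality of f at xbar_t give
   D_(t+1) - D_t <= w_t <grad f(xbar_t), x_(t+1) - xstar>.
   Summation by parts against the nonincreasing etas then bounds the sum from
   below by eta_T D_T >= 0. *)

Lemma dotp_grad (R : realType) (n : nat) (f : 'rV[R]_n -> R) (x v : 'rV[R]_n) :
  dotp (grad f x) v = 'd f x v.
Proof.
rewrite /dotp /grad [in RHS](row_sum_delta v) linear_sum /=.
by apply: eq_bigr => i _; rewrite mxE linearZ /= mulrC.
Qed.

Section ConvexDifferential.
Variables (R : realType) (n : nat) (K : set 'rV[R]_n) (f : 'rV[R]_n -> R).
Hypothesis convex_f : convex_on K f.

Lemma convex_on_diff_quotient_le (x y : 'rV[R]_n) (h : R) :
  K x -> K y -> 0 < h <= 1 ->
  h^-1 * (f (h *: (y - x) + x) - f x) <= f y - f x.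
Proof.
move=> Kx Ky /andP[h_gt0 h_le1].
have -> : h *: (y - x) + x = h *: y + (1 - h) *: x.
  by rewrite scalerBr scalerBl scale1r addrA addrAC.
have := @convex_f y x h Ky Kx; rewrite h_le1 ltW // => /(_ isT) convex_ineq.
rewrite ler_pdivrMl // lerBlDr (le_trans convex_ineq) //.
by rewrite mulrBl mul1r mulrBr addrA addrAC.
Qed.

Lemma convex_on_diff_le (x y : 'rV[R]_n) :
  K x -> K y -> differentiable f x -> 'd f x (y - x) <= f y - f x.
Proof.
move=> Kx Ky dfx; rewrite -deriveE //.
have /cvg_ex[l fl] := diff_derivable (v := y - x) dfx.
have -> : 'D_(y - x) f x = l by exact: cvg_lim.
have fl_right : (fun h : R => h^-1 *: ((f \o shift x) (h *: (y - x)) - f x))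
    @ 0^'+ --> l.
  apply: cvg_trans fl; apply: cvg_app.
  by apply: within_subset => h /= h_gt0; rewrite gt_eqF.
apply: (closed_cvg [set z | z <= f y - f x] (@closed_le _ _) _ _ fl_right).
near=> h.
have h01 : 0 < h <= 1.
  by apply/andP; split; near: h; [exact: nbhs_right_gt | exact: nbhs_right_le].
exact: convex_on_diff_quotient_le Kx Ky h01.
Unshelve. all: by end_near.
Qed.

End ConvexDifferential.

Lemma weighted_telescope_ge (R : numDomainType) (eta D : nat -> R) (T : nat) :
  (forall t, eta t.+1 <= eta t) -> (forall t, 0 <= D t) -> D 0%N = 0 ->
  eta T * D T <= \sum_(t < T) eta t * (D t.+1 - D t).
Proof.
move=> eta_noninc D_ge0 D0; elim: T => [|T IH]; first by rewrite big_ord0 D0 mulr0.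
rewrite big_ord_recr /=; apply: le_trans (lerD IH (lexx _)).
by rewrite mulrBr addrCA subrr addr0 ler_wpM2r.
Qed.

Lemma convex_setK_barycenter (R : realType) (n : nat) (K : set 'rV[R]_n)
    (a b : 'rV[R]_n) (p q : R) :
  convex_setK K -> K a -> K b -> 0 <= p -> 0 < q ->
  K ((p + q)^-1 *: (p *: a + q *: b)).
Proof.
move=> convex_K Ka Kb p_ge0 q_gt0.
have pq_gt0 : 0 < p + q by rewrite ltr_wpDl.
have -> : (p + q)^-1 *: (p *: a + q *: b) =
    (p / (p + q)) *: a + (1 - p / (p + q)) *: b.
  rewrite -[in 1 - _](divff (lt0r_neq0 pq_gt0)) -mulrBl addrAC subrr add0r.
  by rewrite scalerDr !scalerA ![_^-1 * _]mulrC.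
apply: convex_K => //.
by rewrite divr_ge0 ?(ltW pq_gt0) //= ler_pdivrMr // mul1r lerDl ltW.
Qed.

Definition wmass (R : realType) (w : nat -> R) (t : nat) : R := \sum_(k < t) w k.

Section WeightedAverage.
Variables (R : realType) (n : nat) (w : nat -> R) (x : nat -> 'rV[R]_n).
Hypothesis w_gt0 : forall k, 0 < w k.

Lemma wmass0 : wmass w 0 = 0.
Proof. by rewrite /wmass big_ord0. Qed.

Lemma wmassS t : wmass w t.+1 = wmass w t + w t.
Proof. by rewrite /wmass big_ord_recr. Qed.

Lemma wmass_ge0 t : 0 <= wmass w t.
Proof. by apply: sumr_ge0 => k _; exact: ltW. Qed.

Lemma wmassS_gt0 t : 0 < wmass w t.+1.
Proof. by rewrite wmassS ltr_wpDl ?wmass_ge0. Qed.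

(* At [t = 0] the junk value [wavg w x 0.-1] is harmless: its weight [wmass w 0] is 0. *)
Lemma wmass_scale_wavgS t :
  wmass w t.+1 *: wavg w x t = wmass w t *: wavg w x t.-1 + w t *: x t.+1.
Proof.
have scale_wavg s : wmass w s.+1 *: wavg w x s = \sum_(k < s.+1) w k *: x k.+1.
  by rewrite /wavg scalerA mulfV ?scale1r // lt0r_neq0 ?wmassS_gt0.
rewrite scale_wavg big_ord_recr /=; case: t => [|t].
  by rewrite wmass0 big_ord0 scale0r.
by rewrite -scale_wavg.
Qed.

Lemma wavg_in_convex (K : set 'rV[R]_n) :
  convex_setK K -> (forall k, K (x k.+1)) -> forall t, K (wavg w x t).
Proof.
move=> convex_K K_x; elim=> [|t IH].
  by rewrite /wavg !big_ord1 scalerA mulVf ?scale1r ?lt0r_neq0.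
have -> : wavg w x t.+1 = (wmass w t.+1 + w t.+1)^-1 *:
    (wmass w t.+1 *: wavg w x t + w t.+1 *: x t.+2).
  by rewrite -wmassS -wmass_scale_wavgS scalerA mulVf ?scale1r ?lt0r_neq0 ?wmassS_gt0.
exact: convex_setK_barycenter (wmass_ge0 _) (w_gt0 _).
Qed.

End WeightedAverage.

Section Potential.
Variables (R : realType) (n : nat) (K : set 'rV[R]_n) (f : 'rV[R]_n -> R).
Variables (xstar : 'rV[R]_n) (x : nat -> 'rV[R]_n) (w : nat -> R).
Hypotheses (convex_K : convex_setK K) (convex_f : convex_on K f).
Hypotheses (diff_f : forall y, K y -> differentiable f y) (K_xstar : K xstar).
Hypotheses (K_x : forall k, K (x k.+1)) (w_gt0 : forall k, 0 < w k).

Definition potential t := wmass w t * (f (wavg w x t.-1) - f xstar).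

Lemma potential0 : potential 0 = 0.
Proof. by rewrite /potential wmass0 mul0r. Qed.

Lemma potential_ge0 : (forall y, K y -> f xstar <= f y) -> forall t, 0 <= potential t.
Proof.
move=> xstar_min t; rewrite /potential mulr_ge0 ?wmass_ge0 // subr_ge0.
by apply/xstar_min/(wavg_in_convex w_gt0 convex_K K_x).
Qed.

Lemma convex_on_sub_le_diff a b : K a -> K b -> f a - f b <= 'd f a (a - b).
Proof.
move=> Ka Kb; rewrite -[a - b]opprB linearN lerNr opprB.
by apply: (convex_on_diff_le convex_f Ka Kb); apply: diff_f.
Qed.

Lemma potential_incr_le t :
  potential t.+1 - potential t <= w t * 'd f (wavg w x t) (x t.+1 - xstar).
Proof.
have K_wavg := wavg_in_convex w_gt0 convex_K K_x.
have [K_B K_B'] := (K_wavg t, K_wavg t.-1).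
set B := wavg w x t in K_B *; set B' := wavg w x t.-1 in K_B' *.
have increment_split : w t *: (x t.+1 - xstar) =
    w t *: (B - xstar) + wmass w t *: (B - B').
  have := wmass_scale_wavgS x w_gt0 t; rewrite wmassS scalerDl -/B -/B' => e.
  rewrite !scalerBr.
  have -> : w t *: x t.+1 = wmass w t *: B + w t *: B - wmass w t *: B'.
    by rewrite e addrAC subrr add0r.
  by rewrite addrACA [w t *: B + _]addrC [- (w t *: xstar) + _]addrC addrA.
have -> : potential t.+1 - potential t =
    w t * (f B - f xstar) + wmass w t * (f B - f B').
  by rewrite /potential wmassS /=; ring.
clearbody B B'.
have -> : w t * 'd f B (x t.+1 - xstar) =
    w t * 'd f B (B - xstar) + wmass w t * 'd f B (B - B').
  by rewrite -[LHS]/(w t *: _) -linearZ increment_split linearD linearZ /= linearZ.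
apply: lerD; apply: ler_wpM2l; rewrite ?wmass_ge0 ?(ltW (w_gt0 t)) //;
  exact: convex_on_sub_le_diff.
Qed.

End Potential.

Theorem lemma17 (R : realType) (n : nat) (K : set 'rV[R]_n)
  (f : 'rV[R]_n -> R) (xstar : 'rV[R]_n)
  (x : nat -> 'rV[R]_n) (w eta : nat -> R) (T : nat) :
  convex_setK K ->
  convex_on K f ->
  (forall y, K y -> differentiable f y) ->
  K xstar -> (forall y, K y -> f xstar <= f y) ->
  (forall k, K (x k.+1)) ->
  (forall k, 0 < w k) ->
  (forall t, 0 < eta t) ->
  (forall t, eta t.+1 <= eta t) ->
  (0 < T)%N ->
  0 <= \sum_(t < T) w t * eta t * dotp (grad f (wavg w x t)) (x t.+1 - xstar).
Proof.
move=> convex_K convex_f diff_f K_xstar xstar_min K_x w_gt0 eta_gt0 eta_noninc _.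
have D_ge0 := potential_ge0 convex_K K_x w_gt0 xstar_min.
apply: le_trans (mulr_ge0 (ltW (eta_gt0 T)) (D_ge0 T)) _.
apply: le_trans (weighted_telescope_ge T eta_noninc D_ge0 (potential0 f xstar x w)) _.
apply: ler_sum => t _; rewrite dotp_grad mulrAC [eta t * _]mulrC.
apply: ler_wpM2r; first exact: ltW.
exact: (potential_incr_le convex_K convex_f diff_f K_xstar K_x w_gt0).
Qed.
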